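(* Let $G=(V_G,E_G)$ be an undirected graph whose vertex set is partitioned among machines $M_1,\dots,M_m$ (every vertex is owned by exactly one machine), and let $G_t$ denote the partition owned by $M_t$. Let $P=(V_P,E_P)$ be a connected undirected query graph. Let $v$ be a data vertex owned by $M_t$ and $u\in V_P$ a query vertex. If $\mathrm{Span}_P(u)\le \mathrm{BD}_{G_t}(v)$, then there is no embedding $f$ of $P$ in $G$ such that $f(u)=v$ and $f(u')$ is not owned by $M_t$ for some $u'\in V_P$ with $u'\neq u$.
   Context: An embedding of $P$ in $G$ is an injective map $f:V_P\to V_G$ such that $(f(u_1),f(u_2))\in E_G$ for every $(u_1,u_2)\in E_P$. A vertex $w$ owned by $M_t$ is a border vertex of $G_t$ if some neighbour of $w$ in $G$ is owned by a machine other than $M_t$; $V^b_{G_t}$ is the set of border vertices of $G_t$. The border distance of $v$ is $\mathrm{BD}_{G_t}(v)=\min_{v'\in V^b_{G_t}} \mathrm{dist}(v,v')$, where $\mathrm{dist}$ is the shortest-path distance in $G$. The span of $u$ is $\mathrm{Span}_P(u)=\max_{u'\in V_P}\mathrm{dist}_P(u,u')$, the maximum shortest-path distance in $P$ from $u$ to any vertex of $P$. *)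

From mathcomp Require Import all_boot.
Set Implicit Arguments. Unset Strict Implicit. Unset Printing Implicit Defensive.

(* Graphs: a finite vertex type T with an edge relation e : rel T.
   Undirectedness is imposed as the hypothesis [symmetric e]. *)

Definition walkb (T : finType) (e : rel T) (x y : T) (k : nat) : bool :=
  [exists p : k.-tuple T, path e x p && (last x p == y)].

(* Shortest-path distance, extended: [None] = +infinity (unreachable).
   A shortest walk is a simple path, so it has fewer than #|T| edges. *)
Definition dist (T : finType) (e : rel T) (x y : T) : option nat :=
  match [seq k <- iota 0 #|T| | walkb e x y k] with
  | k :: _ => Some k
  | [::] => None
  end.

Definition emin (a b : option nat) : option nat :=
  match a, b with
  | None, _ => b
  | _, None => a
  | Some x, Some y => Some (minn x y)
  end.

Definition ele (a b : option nat) : bool :=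
  match a, b with
  | _, None => true
  | None, Some _ => false
  | Some x, Some y => x <= y
  end.

Definition border (VG : finType) (eG : rel VG) (m : nat) (owner : VG -> 'I_m)
    (t : 'I_m) (w : VG) : bool :=
  (owner w == t) && [exists w', eG w w' && (owner w' != t)].

Definition BD (VG : finType) (eG : rel VG) (m : nat) (owner : VG -> 'I_m)
    (t : 'I_m) (v : VG) : option nat :=
  foldr emin None [seq dist eG v w | w <- enum VG & border eG owner t w].

Definition Span (VP : finType) (eP : rel VP) (u : VP) : option nat :=
  foldr (fun a b => match a, b with
                    | Some x, Some y => Some (maxn x y)
                    | _, _ => None end)
        (Some 0) [seq dist eP u u' | u' <- enum VP].

Definition embedding (VP VG : finType) (eP : rel VP) (eG : rel VG)
    (f : VP -> VG) : Prop :=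
  injective f /\ forall a b, eP a b -> eG (f a) (f b).

From mathcomp Require Import all_boot.
Set Implicit Arguments. Unset Strict Implicit. Unset Printing Implicit Defensive.

(* A shortest walk in P from u to u' has some length d <= Span_P(u). Its image
   under f is a walk of length d in G from v, which starts inside G_t and ends
   outside it, so it meets a border vertex of G_t after fewer than d steps;
   hence BD_{G_t}(v) < d <= Span_P(u). *)

Lemma ele_trans : transitive ele.
Proof. by move=> [y|] [x|] [z|] //=; apply: leq_trans. Qed.

Lemma ele_eminl a b : ele (emin a b) a.
Proof. by case: a b => [x|] [y|] //=; rewrite geq_minl. Qed.

Lemma ele_eminr a b : ele (emin a b) b.
Proof. by case: a b => [x|] [y|] //=; rewrite geq_minr. Qed.

Lemma foldr_emin_ele (s : seq (option nat)) a : a \in s -> ele (foldr emin None s) a.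
Proof.
elim: s => [//|b s IHs]; rewrite in_cons => /predU1P [->|/IHs]; first exact: ele_eminl.
exact/ele_trans/ele_eminr.
Qed.

Definition omaxn (a b : option nat) : option nat :=
  if (a, b) is (Some x, Some y) then Some (maxn x y) else None.

Lemma ele_omaxnl a b : ele a (omaxn a b).
Proof. by case: a b => [x|] [y|] //=; rewrite leq_maxl. Qed.

Lemma ele_omaxnr a b : ele b (omaxn a b).
Proof. by case: a b => [x|] [y|] //=; rewrite leq_maxr. Qed.

Lemma ele_foldr_omaxn (s : seq (option nat)) a : a \in s -> ele a (foldr omaxn (Some 0) s).
Proof.
elim: s => [//|b s IHs]; rewrite in_cons => /predU1P [->|/IHs]; first exact: ele_omaxnl.
by move/ele_trans; apply; apply: ele_omaxnr.
Qed.

Section Walks.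
Variables (T : finType) (e : rel T).
Implicit Types (x y : T) (k : nat).

Lemma walkbP x y k :
  reflect (exists p : seq T, [/\ size p = k, path e x p & last x p = y])
          (walkb e x y k).
Proof.
apply: (iffP existsP) => [[p /andP [path_p /eqP last_p]]|[p [size_p path_p last_p]]].
  by exists (val p); rewrite size_tuple.
have size_p' : size p == k by rewrite size_p.
by exists (Tuple size_p'); rewrite /= path_p last_p eqxx.
Qed.

Lemma walkb_lt_card x y k :
  walkb e x y k -> exists j, [/\ j <= k, j < #|T| & walkb e x y j].
Proof.
case: (ltnP k #|T|) => [lt_kT walk_k|le_Tk /walkbP [p [_ path_p last_p]]].
  by exists k.
case/shortenP: path_p last_p => p' path_p' uniq_p' _ last_p'.
have short_p' : size (x :: p') <= #|T| by rewrite -(card_uniqP uniq_p') max_card.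
exists (size p'); split=> //; first exact: ltnW (leq_trans short_p' le_Tk).
by apply/walkbP; exists p'.
Qed.

Lemma dist_le_walkb x y k : walkb e x y k -> ele (dist e x y) (Some k).
Proof.
case/walkb_lt_card => j [le_jk lt_jT walk_j].
have : j \in [seq i <- iota 0 #|T| | walkb e x y i] by rewrite mem_filter walk_j mem_iota.
have : sorted leq [seq i <- iota 0 #|T| | walkb e x y i].
  exact/sorted_filter/iota_sorted/leq_trans.
rewrite /dist; case: [seq _ <- _ | _] => [//|h s] /= /(order_path_min leq_trans)/allP h_min.
by rewrite in_cons => /predU1P [<-|/h_min le_hj] //; apply: leq_trans le_jk.
Qed.

Lemma dist_walkb x y k : dist e x y = Some k -> walkb e x y k.
Proof.
rewrite /dist; have : all (walkb e x y) [seq i <- iota 0 #|T| | walkb e x y i].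
  exact: filter_all.
by case: [seq _ <- _ | _] => [//|h s] /andP [walk_h _] [<-].
Qed.

Lemma connect_dist x y : connect e x y -> exists d, dist e x y = Some d.
Proof.
case/connectP => p path_p last_p.
have : ele (dist e x y) (Some (size p)) by apply: dist_le_walkb; apply/walkbP; exists p.
by case: (dist e x y) => [d|] // _; exists d.
Qed.

Lemma dist_le_Span x y : ele (dist e x y) (Span e x).
Proof. by apply: ele_foldr_omaxn; rewrite map_f ?mem_enum. Qed.

End Walks.

Lemma walkb_homo (T S : finType) (e : rel T) (e' : rel S) (f : T -> S) x y k :
  {homo f : a b / e a b >-> e' a b} -> walkb e x y k -> walkb e' (f x) (f y) k.
Proof.
move=> f_homo /walkbP [p [size_p path_p last_p]]; apply/walkbP.
by exists (map f p); rewrite size_map (homo_path f_homo) // last_map last_p.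
Qed.

Section Partition.
Variables (VG : finType) (eG : rel VG) (m : nat) (owner : VG -> 'I_m) (t : 'I_m).

Lemma BD_le_dist v w : border eG owner t w -> ele (BD eG owner t v) (dist eG v w).
Proof. by move=> bw; apply: foldr_emin_ele; rewrite map_f // mem_filter bw mem_enum. Qed.

Lemma walkb_exit_border x y k : owner x = t -> owner y != t -> walkb eG x y k ->
  exists2 w, border eG owner t w & exists2 j, j < k & walkb eG x w j.
Proof.
move=> own_x own_y /walkbP [p [<- path_p last_p]]; rewrite -{}last_p in own_y.
elim: p x own_x path_p own_y => [|z p IHp] x own_x /=; first by rewrite own_x eqxx.
case/andP=> e_xz path_p own_last; have [/eqP own_z|own_z] := boolP (owner z == t).
  have [w bw [j lt_jp /walkbP [q [size_q path_q last_q]]]] := IHp z own_z path_p own_last.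
  exists w => //; exists j.+1 => //; apply/walkbP; exists (z :: q).
  by rewrite /= size_q e_xz path_q last_q.
exists x; last by exists 0 => //; apply/walkbP; exists [::].
by rewrite /border own_x eqxx; apply/existsP; exists z; rewrite e_xz own_z.
Qed.

End Partition.

Theorem proposition1 (VG : finType) (eG : rel VG) (m : nat)
    (owner : VG -> 'I_m) (VP : finType) (eP : rel VP) (t : 'I_m)
    (v : VG) (u : VP) :
  symmetric eG -> symmetric eP ->
  (forall a b : VP, connect eP a b) ->
  owner v = t ->
  ele (Span eP u) (BD eG owner t v) ->
  ~ (exists f : VP -> VG, embedding eP eG f /\ f u = v /\
       exists u' : VP, u' != u /\ owner (f u') != t).
Proof.
move=> _ _ connP own_v Span_le_BD [f [[_ f_homo] [fu [u' [_ own_fu']]]]].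
have [d dist_d] := connect_dist (connP u u').
have walk_d : walkb eG v (f u') d by rewrite -fu; exact: walkb_homo (dist_walkb dist_d).
have [w bw [j lt_jd walk_j]] := walkb_exit_border own_v own_fu' walk_d.
have : ele (Some d) (Some j).
  rewrite -dist_d; apply: ele_trans (dist_le_Span _ _ _) _.
  apply: ele_trans Span_le_BD _; apply: ele_trans (BD_le_dist v bw) _.
  exact: dist_le_walkb.
by rewrite /= leqNgt lt_jd.
Qed.
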